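(* Let $V$ be an $\mathbb{N}$-graded vertex algebra and $M$ an $A(V)$-module, and let $e_M:M\to T(S(M))$ be the $A(V)$-module isomorphism induced by the natural map $M\to S_1(M)\to S(M)$. Then for any $\mathbb{N}$-gradable weak $V$-module $W$ and any $A(V)$-module map $f:M\to T(W)$, there exists a unique $V$-module map $\tilde f:S(M)\to W$ such that $\tilde f|_{T(S(M))}=f\circ e_M^{-1}$.
   Context: An $\mathbb{N}$-graded vertex algebra is a vertex algebra $(V,Y,\mathbf{1})$ with $V=\coprod_{n\in\mathbb{Z}}V_{(n)}$, $V_{(n)}=0$ for $n<0$, and $[d,Y(u,x)]=x\frac{d}{dx}Y(u,x)+Y(du,x)$ where $du=nu$ for $u\in V_{(n)}$; $\mathrm{wt}\,u=n$ for $u\in V_{(n)}$, $Y(u,x)=\sum_nu_nx^{-n-1}$, $L(0)=d$. An $\mathbb{N}$-gradable weak $V$-module is a module $W=\coprod_{n\in\mathbb{N}}W_{(n)}$ for the vertex algebra $V$ with $u_nW_{(j)}\subset W_{(j+m-n-1)}$ for $u\in V_{(m)}$; $V$-module maps commute with vertex operators. Zhu's algebra: $O(V)$ = span of $\mathrm{Res}_xx^nY((x+1)^{L(0)}u,x)v$ ($u,v\in V$, $n\le-2$); $A(V)=V/O(V)$ with product $u*v=\mathrm{Res}_xx^{-1}Y((x+1)^{L(0)}u,x)v$. The top level $T(W)$ of $W$ is the set of $w$ with $u_nw=0$ whenever $u$ is homogeneous and $\mathrm{wt}\,u-n-1<0$; it is an $A(V)$-module via $u+O(V)\mapsto o(u)=\mathrm{Res}_xx^{-1}Y_W(x^{L(0)}u,x)$.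 Construction of $S(M)$ for an $A(V)$-module $M$ with representation $\rho$: with $u(m)=u\otimes t^m\in V[t,t^{-1}]$, $T(V[t,t^{-1}])$ its tensor algebra, $T(V[t,t^{-1}])\otimes M$ graded by $\deg u_1(m_1)\cdots u_r(m_r)w=\sum_i(\mathrm{wt}\,u_i-m_i-1)$ ($w\in M$), $Y_t(u,x)=\sum_mu(m)x^{-m-1}$, $o_t(u)=u(\mathrm{wt}\,u-1)$: $\mathcal{I}$ is the $T(V[t,t^{-1}])$-submodule generated by (1) $u(m)w$ for homogeneous $u,w$ with $\mathrm{wt}\,u-m-1+\deg w<0$; (2) $o_t(u)w-\rho(u+O(V))w$, $u\in V$, $w\in M$; (3) $u(p)v(q)w-\sum_{i=0}^{\mathrm{wt}\,v+\deg w-q-1}\sum_{j=0}^{\mathrm{wt}\,u+\deg w}\binom{p-\mathrm{wt}\,u-\deg w}{i}\binom{\mathrm{wt}\,u+\deg w}{j}(u_{p-\mathrm{wt}\,u-\deg w-i+j}v)(q+\mathrm{wt}\,u+\deg w+i-j)w$ for homogeneous $u,v,w$, $p,q\in\mathbb{Z}$ with $\mathrm{wt}\,v+\deg w>q$, $\mathrm{wt}\,u-p-1+\mathrm{wt}\,v-q-1+\deg w\ge0$. $S_1(M)=(T(V[t,t^{-1}])\otimes M)/\mathcal{I}$. $\mathcal{J}\subset S_1(M)$ is the submodule generated by $\sum_{j=0}^{\mathrm{wt}\,u+\deg w}\binom{\mathrm{wt}\,u+\deg w}{j}(u_{p-i-j}v)(q+i+j)w$ for homogeneous $u,v\in V$,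 homogeneous $w\in S_1(M)$, $p,q\in\mathbb{Z}$, integers $i\ge\mathrm{wt}\,v+\deg w-q$. $S(M)=S_1(M)/\mathcal{J}$ with $Y_{S(M)}(u,x)=\sum_mu(m)x^{-m-1}$; it is an $\mathbb{N}$-gradable weak $V$-module, and the map $M\to S(M)$ is an $A(V)$-module isomorphism $e_M$ onto $T(S(M))$. *)

From HB Require Import structures.
From mathcomp Require Export all_boot all_order all_algebra.
Set Implicit Arguments. Unset Strict Implicit. Unset Printing Implicit Defensive.
Export Order.TTheory GRing.Theory Num.Theory.
Local Open Scope ring_scope.

(* binom(-(a+1), i) = (-1)^i binom(a+i, i).                            *)
Definition binz (z : int) (i : nat) : int :=
  match z with
  | Posz n => ('C(n, i))%:Z
  | Negz a => (-1) ^+ i * ('C(a + i, i))%:Z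
  end.

Definition binF (F : pzRingType) (z : int) (i : nat) : F := (binz z i)%:~R.

Definition upto (U : int) : seq nat :=
  if (0 <= U) then iota 0 (absz U).+1 else [::].

Definition Gz (T : zmodType) (G : nat -> T -> Prop) (z : int) (v : T) : Prop :=
  match z with Posz k => G k v | Negz _ => v = 0 end.

(* T = coprod_{n in N} G n  (direct sum of subspaces) *)
Definition is_grading (F : fieldType) (T : lmodType F) (G : nat -> T -> Prop) : Prop :=
  (forall n, G n 0 /\ forall (a : F) x y, G n x -> G n y -> G n (a *: x + y)) /\
  (forall v, exists (N : nat) (c : nat -> T), (forall n, G n (c n)) /\ v = \sum_(n < N) c n) /\
  (forall (N : nat) (c : nat -> T), (forall n, G n (c n)) ->
       \sum_(n < N) c n = 0 -> forall n, (n < N)%N -> c n = 0).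

(* Vertex operators in components:  Ya u n w = u_n w.                 *)
Definition bilinear_op (F : fieldType) (V A : lmodType F) (Ya : V -> int -> A -> A) :=
  forall n (a : F) u u' w w',
    Ya (a *: u + u') n w = a *: Ya u n w + Ya u' n w /\
    Ya u n (a *: w + w') = a *: Ya u n w + Ya u n w'.

Definition truncation (F : fieldType) (V A : lmodType F) (Ya : V -> int -> A -> A) :=
  forall u w, exists N : int, forall n, N <= n -> Ya u n w = 0.

(* the Jacobi identity, written in components (Borcherds identity):
   sum_{i>=0} binom(m,i) (u_{n+i} v)_{m+k-i} w
     = sum_{i>=0} (-1)^i binom(n,i) (u_{m+n-i} v_{k+i} w - (-1)^n v_{n+k-i} u_{m+i} w);
   all sums are truncated at any N beyond which all terms vanish. *)
Definition jacobi (F : fieldType) (V A : lmodType F)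
    (Y : V -> int -> V -> V) (Ya : V -> int -> A -> A) :=
  forall (u v : V) (w : A) (m n k : int) (N : nat),
    (forall i : nat, (N <= i)%N ->
       [/\ Y u (n + i%:Z) v = 0, Ya v (k + i%:Z) w = 0 & Ya u (m + i%:Z) w = 0]) ->
    \sum_(i < N) binF F m i *: Ya (Y u (n + i%:Z) v) (m + k - i%:Z) w =
    \sum_(i < N) ((-1) ^+ i * binF F n i) *:
        (Ya u (m + n - i%:Z) (Ya v (k + i%:Z) w)
         - (-1) ^+ (absz n) *: Ya v (n + k - i%:Z) (Ya u (m + i%:Z) w)).

(* u in V_(m), w in A_(k)  ==>  u_n w in A_(k + m - n - 1)  (0 if negative);
   this is the component form of [d, Y(u,x)] = x d/dx Y(u,x) + Y(du,x). *)
Definition graded_op (F : fieldType) (V A : lmodType F)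
    (G : nat -> V -> Prop) (GA : nat -> A -> Prop) (Ya : V -> int -> A -> A) :=
  forall (m k : nat) u w (n : int), G m u -> GA k w ->
    Gz GA (k%:Z + m%:Z - n - 1) (Ya u n w).

Definition is_NgradedVA (F : fieldType) (V : lmodType F)
    (Y : V -> int -> V -> V) (one : V) (G : nat -> V -> Prop) : Prop :=
  bilinear_op Y /\ truncation Y /\
  (forall n v, Y one n v = if n == -1 then v else 0) /\
  (forall v, Y v (-1) one = v /\ forall n, 0 <= n -> Y v n one = 0) /\
  jacobi Y Y /\ is_grading G /\ graded_op G G Y.

Definition is_weak_module (F : fieldType) (V : lmodType F)
    (Y : V -> int -> V -> V) (one : V) (W : lmodType F) (YW : V -> int -> W -> W) : Prop :=
  bilinear_op YW /\ truncation YW /\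
  (forall n w, YW one n w = if n == -1 then w else 0) /\ jacobi Y YW.

Definition is_Ngradable_weak_module (F : fieldType) (V : lmodType F)
    (Y : V -> int -> V -> V) (one : V) (G : nat -> V -> Prop)
    (W : lmodType F) (YW : V -> int -> W -> W) : Prop :=
  is_weak_module Y one YW /\
  exists GW : nat -> W -> Prop, is_grading GW /\ graded_op G GW YW.

(* For u homogeneous of weight k:
   Res_x x^n Y((x+1)^{L(0)} u, x) v = sum_{j=0}^k binom(k,j) u_{n+j} v,
   u * v = Res_x x^{-1} Y((x+1)^{L(0)} u, x) v = sum_j binom(k,j) u_{j-1} v.
   (both extended linearly in u) *)
Definition zhu_circ (F : fieldType) (V : lmodType F) (Y : V -> int -> V -> V)
    (k : nat) (u : V) (n : int) (v : V) : V :=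
  \sum_(j < k.+1) ('C(k, j))%:R *: Y u (n + j%:Z) v.

Definition zhu_star (F : fieldType) (V : lmodType F) (Y : V -> int -> V -> V)
    (k : nat) (u v : V) : V :=
  \sum_(j < k.+1) ('C(k, j))%:R *: Y u (j%:Z - 1) v.

(* A (unital, left) A(V)-module M with representation rho, given through
   rho : V -> End(M) (rho u = rho(u + O(V))): rho is linear, vanishes on
   O(V) (= span of the zhu_circ u n v, u homogeneous, n <= -2), is
   multiplicative for * and sends the unit 1 + O(V) to the identity. *)
Definition is_AV_module (F : fieldType) (V : lmodType F)
    (Y : V -> int -> V -> V) (one : V) (G : nat -> V -> Prop)
    (M : lmodType F) (rho : V -> M -> M) : Prop :=
  (forall (a : F) u u' w, rho (a *: u + u') w = a *: rho u w + rho u' w) /\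
  (forall u (a : F) w w', rho u (a *: w + w') = a *: rho u w + rho u w') /\
  (forall k u v n w, G k u -> n <= -2 -> rho (zhu_circ Y k u n v) w = 0) /\
  (forall k u v w, G k u -> rho (zhu_star Y k u v) w = rho u (rho v w)) /\
  (forall w, rho one w = w).

Definition in_top (F : fieldType) (V : lmodType F) (G : nat -> V -> Prop)
    (W : lmodType F) (YW : V -> int -> W -> W) (w : W) : Prop :=
  forall (k : nat) u (n : int), G k u -> k%:Z - n - 1 < 0 -> YW u n w = 0.

(* A(V)-module map f : M -> T(W), where T(W) carries o(u) = u_{wt u - 1} *)
Definition is_AV_map (F : fieldType) (V : lmodType F) (G : nat -> V -> Prop)
    (M : lmodType F) (rho : V -> M -> M)
    (W : lmodType F) (YW : V -> int -> W -> W) (f : M -> W) : Prop :=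
  (forall (a : F) m m', f (a *: m + m') = a *: f m + f m') /\
  (forall m, in_top G YW (f m)) /\
  (forall k u m, G k u -> f (rho u m) = YW u (k%:Z - 1) (f m)).

(* A spanning word u_1(m_1) ... u_r(m_r) w  of T(V[t,t^-1]) (x) M is   *)
(* represented by the pair ([:: (u_1,m_1); ...; (u_r,m_r)], w).        *)
(* Formal linear combinations of words: seq (F * word).                *)
Definition word (F : fieldType) (V M : lmodType F) := (seq (V * int) * M)%type.

Definition prefix_combo (F : fieldType) (V M : lmodType F)
    (s : seq (V * int)) (c : seq (F * word V M)) : seq (F * word V M) :=
  [seq (p.1, (s ++ p.2.1, p.2.2)) | p <- c].

Definition eval_combo (F : fieldType) (V M W : lmodType F)
    (phi : word V M -> W) (c : seq (F * word V M)) : W :=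
  \sum_(p <- c) p.1 *: phi p.2.

Definition word_deg (F : fieldType) (V : lmodType F) (G : nat -> V -> Prop)
    (x : seq (V * int)) (d : int) : Prop :=
  exists ks : seq nat, size ks = size x /\
    (forall i, (i < size x)%N -> G (nth 0%N ks i) (nth (0, 0) x i).1) /\
    d = \sum_(i < size x) ((nth 0%N ks i)%:Z - (nth (0, 0) x i).2 - 1).

(* Generators of the subspace R of the free vector space on words such
   that S(M) = (free space on words) / R: multilinearity relations (which
   produce the tensor algebra T(V[t,t^-1]) (x) M), the generators (1),(2),(3)
   of I, and (lifts to T(V[t,t^-1]) (x) M of) the generators of J.  R is the
   span of all left translates (prefix_combo) of these generators, i.e. the
   T(V[t,t^-1])-submodule they generate; so S(M) = S_1(M)/J. *)
Inductive SM_gen (F : fieldType) (V : lmodType F) (Y : V -> int -> V -> V)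
    (G : nat -> V -> Prop) (M : lmodType F) (rho : V -> M -> M) :
    seq (F * word V M) -> Prop :=
| SM_lin_letter (x1 x2 : seq (V * int)) (a : F) (u u' : V) (n : int) (w : M) :
    SM_gen Y G rho [:: (1, (x1 ++ (a *: u + u', n) :: x2, w));
                       (- a, (x1 ++ (u, n) :: x2, w));
                       (-1, (x1 ++ (u', n) :: x2, w))]
| SM_lin_M (x : seq (V * int)) (a : F) (w w' : M) :
    SM_gen Y G rho [:: (1, (x, a *: w + w')); (- a, (x, w)); (-1, (x, w'))]
| SM_I1 (k : nat) (u : V) (m : int) (x : seq (V * int)) (w : M) (d : int) :
    G k u -> word_deg G x d -> k%:Z - m - 1 + d < 0 ->
    SM_gen Y G rho [:: (1, ((u, m) :: x, w))]
| SM_I2 (k : nat) (u : V) (w : M) :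
    G k u ->
    SM_gen Y G rho [:: (1, ([:: (u, k%:Z - 1)], w)); (-1, ([::], rho u w))]
| SM_I3 (a b : nat) (u v : V) (x : seq (V * int)) (w : M) (d p q : int) :
    G a u -> G b v -> word_deg G x d ->
    q < b%:Z + d -> 0 <= a%:Z - p - 1 + b%:Z - q - 1 + d ->
    SM_gen Y G rho
      ((1, ((u, p) :: (v, q) :: x, w)) ::
       flatten [seq [seq (- (binF F (p - a%:Z - d) i * binF F (a%:Z + d) j),
                          ((Y u (p - a%:Z - d - i%:Z + j%:Z) v,
                            q + a%:Z + d + i%:Z - j%:Z) :: x, w))
                    | j <- upto (a%:Z + d)]
               | i <- upto (b%:Z + d - q - 1)])
| SM_J (a b : nat) (u v : V) (x : seq (V * int)) (w : M) (d p q i : int) :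
    G a u -> G b v -> word_deg G x d -> b%:Z + d - q <= i ->
    SM_gen Y G rho
      [seq (binF F (a%:Z + d) j, ((Y u (p - i - j%:Z) v, q + i + j%:Z) :: x, w))
      | j <- upto (a%:Z + d)].

(* A linear map S(M) -> W is the same as a function phi on words whose
   linear extension kills R.  The vertex operator Y_{S(M)}(u,x) = sum u(m) x^{-m-1}
   acts by prepending the letter (u,m); T(S(M)) contains the image e_M(M)
   of the words ([::], w).  phi is (the restriction to words of) a V-module
   map S(M) -> W whose restriction to T(S(M)) is f o e_M^{-1}: *)
Definition SM_module_map_extending (F : fieldType) (V : lmodType F)
    (Y : V -> int -> V -> V) (G : nat -> V -> Prop)
    (M : lmodType F) (rho : V -> M -> M)
    (W : lmodType F) (YW : V -> int -> W -> W) (f : M -> W)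
    (phi : word V M -> W) : Prop :=
  (forall (s : seq (V * int)) c, SM_gen Y G rho c -> eval_combo phi (prefix_combo s c) = 0) /\
  (forall u n x w, phi ((u, n) :: x, w) = YW u n (phi (x, w))) /\
  (forall m, phi ([::], m) = f m).

(* The map is forced: a V-module map S(M) -> W extending f sends the word
   u_1(m_1) ... u_r(m_r) w to (u_1)_{m_1} ... (u_r)_{m_r} f(w), which gives
   uniqueness.  For existence this word evaluation must kill every relation.
   Multilinearity and relation (2) hold because f is an A(V)-module map into
   T(W).  Relation (1) holds because the span of the modes c_r t (c of weight
   k, k - r - 1 = d) of a top-level vector t is stable under all modes with the
   expected degree shift (by associativity), and vanishes for d < 0.
   Relation (3) is the associativity formula in W, obtained from the Jacobi
   identity and a binomial inversion, and the generators of J are the Jacobi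
   identity with a vanishing right-hand side. *)
From HB Require Import structures.
From mathcomp Require Import all_boot all_order all_algebra.
From mathcomp Require Import zify ring.
Set Implicit Arguments. Unset Strict Implicit. Unset Printing Implicit Defensive.
Import Order.TTheory GRing.Theory Num.Theory.
Local Open Scope ring_scope.

Lemma binz0 z : binz z 0 = 1.
Proof. by case: z => [n|a] /=; rewrite ?bin0 ?addn0 ?expr0 ?mul1r. Qed.

Lemma binzS z i : binz z i.+1 * (i.+1)%:Z = binz z i * (z - i%:Z).
Proof.
case: z => [n|a] /=.
  have := mul_bin_left n i.
  case: (leqP i n) => hin.
    by rewrite subzn // => h; rewrite -!PoszM mulnC h mulnC.
  move=> _; rewrite (bin_small hin) (bin_small (ltn_trans hin (ltnSn i))).
  by rewrite !mul0r.
rewrite NegzE addnS exprS.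
have hz : ('C((a + i).+1, i.+1))%:Z * (i.+1)%:Z = ('C(a + i, i))%:Z * ((a + i).+1)%:Z :> int.
  by rewrite -!PoszM mulnC -(mul_bin_diag (a + i).+1 i) mulnC.
have -> : - (a.+1)%:Z - i%:Z = - ((a + i).+1)%:Z by lia.
by rewrite -!mulrA hz; ring.
Qed.

Definition falling_factz (z : int) (i : nat) : int := \prod_(t < i) (z - t%:Z).

Lemma binz_fact z i : binz z i * (i`!)%:Z = falling_factz z i.
Proof.
elim: i => [|i IH]; first by rewrite binz0 /falling_factz big_ord0 fact0 mulr1.
rewrite /falling_factz big_ord_recr /= -/(falling_factz z i) -IH factS PoszM.
by rewrite mulrA binzS; ring.
Qed.

Lemma falling_factzD z i l :
  falling_factz z (i + l) = falling_factz z i * falling_factz (z - i%:Z) l.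
Proof.
rewrite /falling_factz big_split_ord /=; congr (_ * _).
by apply: eq_bigr => t _ /=; rewrite PoszD; ring.
Qed.

Lemma binz_mul z i l :
  binz z i * binz (z - i%:Z) l = binz z (i + l) * ('C(i + l, i))%:Z.
Proof.
have hfact : ((i`! * l`!)%N%:Z : int) != 0.
  by rewrite eqz_nat muln_eq0 negb_or -!lt0n !fact_gt0.
apply: (mulIf hfact).
have -> : binz z i * binz (z - i%:Z) l * (i`! * l`!)%N%:Z
   = (binz z i * (i`!)%:Z) * (binz (z - i%:Z) l * (l`!)%:Z) by rewrite PoszM; ring.
rewrite !binz_fact -falling_factzD -binz_fact -mulrA -PoszM.
by have := bin_fact (leq_addr l i); rewrite addKn => ->.
Qed.

Lemma binF0 (R : pzRingType) z : binF R z 0 = 1.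
Proof. by rewrite /binF binz0. Qed.

Lemma binF_small (R : pzRingType) (A j : nat) : (A < j)%N -> binF R A j = 0.
Proof. by move=> h; rewrite /binF /= bin_small. Qed.

Lemma sum_binF_alternating (R : comPzRingType) (N : int) (s : nat) :
  \sum_(i < s.+1) binF R N i * ((-1) ^+ (s - i) * binF R (N - i%:Z) (s - i))
  = (s == 0%N)%:R.
Proof.
transitivity (binF R N s * \sum_(i < s.+1) ((-1) ^+ (s - i) * 1 ^+ i *+ 'C(s, i))).
  rewrite mulr_sumr; apply: eq_bigr => i _.
  have hi : (i <= s)%N by rewrite -ltnS.
  have := binz_mul N i (s - i); rewrite subnKC // => h.
  rewrite expr1n mulr1 /binF mulrCA -intrM h intrM -mulr_natr.
  change ((('C(s, i))%:Z)%:~R : R) with (('C(s, i))%:R : R); ring.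
rewrite -(exprDn (-1) 1) addNr expr0n.
by case: s => [|s] /=; rewrite ?mulr0 // binF0 mulr1.
Qed.

Lemma big_ord_trunc (T : nmodType) (N K : nat) (g : nat -> T) :
  (K <= N)%N -> (forall i, (K <= i)%N -> g i = 0) ->
  \sum_(i < N) g i = \sum_(i < K) g i.
Proof.
move=> KN h; rewrite -!(big_mkord xpredT) (@big_cat_nat _ _ _ K 0 N _ _ (leq0n K) KN) /=.
rewrite [X in _ + X]big1_seq ?addr0 // => i /andP [_].
by rewrite mem_index_iota => /andP [hi _]; exact: h.
Qed.

Lemma big_iota0_ord (T : nmodType) n (g : nat -> T) :
  \sum_(i <- iota 0 n) g i = \sum_(i < n) g i.
Proof. by rewrite -(big_mkord xpredT) /index_iota subn0. Qed.

Lemma big_ord_triangle (T : nmodType) (n : nat) (g : nat -> nat -> T) :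
  \sum_(i < n) \sum_(l < n - i) g i (i + l)%N = \sum_(s < n) \sum_(i < s.+1) g i s.
Proof.
elim: n => [|n IH]; first by rewrite !big_ord0.
rewrite [RHS]big_ord_recr /= -IH.
transitivity (\sum_(i < n.+1) (\sum_(l < n - i) g i (i + l)%N + g i n)).
  apply: eq_bigr => i _; have hi : (i <= n)%N by rewrite -ltnS.
  by rewrite subSn // big_ord_recr /= subnKC.
by rewrite big_split /= [X in X + _ = _]big_ord_recr /= subnn big_ord0 addr0.
Qed.

Lemma binF_inversion (R : comPzRingType) (U : lmodType R) (N : int) (B : nat)
    (T : nat -> U) :
  \sum_(i < B.+1) binF R N i *:
     \sum_(l < B.+1 - i) ((-1) ^+ l * binF R (N - i%:Z) l) *: T (i + l)%N = T 0%N.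
Proof.
pose g i s := (binF R N i * ((-1) ^+ (s - i) * binF R (N - i%:Z) (s - i))) *: T s.
transitivity (\sum_(i < B.+1) \sum_(l < B.+1 - i) g i (i + l)%N).
  apply: eq_bigr => i _; rewrite scaler_sumr; apply: eq_bigr => l _.
  by rewrite /g scalerA addKn.
rewrite big_ord_triangle.
transitivity (\sum_(s < B.+1) ((s : nat) == 0%N)%:R *: T s).
  by apply: eq_bigr => s _; rewrite -(sum_binF_alternating R N s) scaler_suml.
by rewrite big_ord_recl /= scale1r big1 ?addr0 // => i _; rewrite scale0r.
Qed.

Section WeakModule.
Variables (F : fieldType) (V : lmodType F) (Y : V -> int -> V -> V)
  (G : nat -> V -> Prop) (W : lmodType F) (YW : V -> int -> W -> W).
Hypotheses (hVtr : truncation Y) (hVgr : graded_op G G Y)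
  (hWbil : bilinear_op YW) (hJ : jacobi Y YW).

Lemma YWr0 u n : YW u n 0 = 0.
Proof.
by have := (hWbil n (-1) u u 0 0).2; rewrite scaler0 addr0 scaleN1r addNr.
Qed.

Lemma YWrZ u n a w : YW u n (a *: w) = a *: YW u n w.
Proof. by have := (hWbil n a u u w 0).2; rewrite !addr0 YWr0 addr0. Qed.

Lemma YWrD u n w w' : YW u n (w + w') = YW u n w + YW u n w'.
Proof. by have := (hWbil n 1 u u w w').2; rewrite !scale1r. Qed.

Lemma YWl0 n w : YW 0 n w = 0.
Proof.
by have := (hWbil n (-1) 0 0 w w).1; rewrite scaler0 addr0 scaleN1r addNr.
Qed.

Lemma YWlZ u n a w : YW (a *: u) n w = a *: YW u n w.
Proof. by have := (hWbil n a u 0 w w).1; rewrite !addr0 YWl0 addr0. Qed.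

Lemma YWlD u u' n w : YW (u + u') n w = YW u n w + YW u' n w.
Proof. by have := (hWbil n 1 u u' w w).1; rewrite !scale1r. Qed.

Definition act_word (x : seq (V * int)) (w : W) : W :=
  foldr (fun l acc => YW l.1 l.2 acc) w x.

Lemma act_word0 x : act_word x 0 = 0.
Proof. by elim: x => [|l x IH] //=; rewrite IH YWr0. Qed.

Lemma act_wordD x w w' : act_word x (w + w') = act_word x w + act_word x w'.
Proof. by elim: x => [|l x IH] //=; rewrite IH YWrD. Qed.

Lemma act_wordZ x a w : act_word x (a *: w) = a *: act_word x w.
Proof. by elim: x => [|l x IH] //=; rewrite IH YWrZ. Qed.

Lemma act_word_sum x (I : Type) (r : seq I) (c : I -> F) (g : I -> W) :
  act_word x (\sum_(i <- r) c i *: g i) = \sum_(i <- r) c i *: act_word x (g i).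
Proof.
elim: r => [|i r IH]; first by rewrite !big_nil act_word0.
by rewrite !big_cons act_wordD act_wordZ IH.
Qed.

Lemma act_word_cat s y w : act_word (s ++ y) w = act_word s (act_word y w).
Proof. by rewrite /act_word foldr_cat. Qed.

(* With u_{A+l} w = 0 for all l, the second half of the right-hand side of
   the Jacobi identity at m = A vanishes. *)
Lemma jacobi_trunc u v w (A : nat) (n k : int) (K : nat) :
  (forall l : nat, YW u (A%:Z + l%:Z) w = 0) ->
  (forall l : nat, (K <= l)%N -> YW v (k + l%:Z) w = 0) ->
  \sum_(j < A.+1) binF F A j *: YW (Y u (n + j%:Z) v) (A%:Z + k - j%:Z) w =
  \sum_(l < K) ((-1) ^+ l * binF F n l) *: YW u (A%:Z + n - l%:Z) (YW v (k + l%:Z) w).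
Proof.
move=> hu hv; have [T1 hT1] := hVtr u v.
pose N := (absz (T1 - n) + A.+1 + K)%N.
have hN : forall i : nat, (N <= i)%N ->
   [/\ Y u (n + i%:Z) v = 0, YW v (k + i%:Z) w = 0 & YW u (A%:Z + i%:Z) w = 0].
  move=> i hi; split; last exact: hu.
    by apply: hT1; have := lez_abs (T1 - n); rewrite /N in hi; lia.
  by apply: hv; rewrite /N in hi; lia.
move: (@hJ u v w A n k N hN).
rewrite (@big_ord_trunc _ N A.+1
  (fun i => binF F A i *: YW (Y u (n + i%:Z) v) (A%:Z + k - i%:Z) w)); last 2 first.
- by rewrite /N; lia.
- by move=> i hi; rewrite binF_small ?scale0r.
move=> ->; rewrite (@big_ord_trunc _ N K (fun i => ((-1) ^+ i * binF F n i) *: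
        (YW u (A%:Z + n - i%:Z) (YW v (k + i%:Z) w)
         - (-1) ^+ (absz n) *: YW v (n + k - i%:Z) (YW u (A%:Z + i%:Z) w)))); last 2 first.
- by rewrite /N; lia.
- by move=> i hi; rewrite hu YWr0 scaler0 subr0 hv ?YWr0 ?scaler0.
by apply: eq_bigr => i _; rewrite hu YWr0 scaler0 subr0.
Qed.

Lemma assoc_YW u v w (A : nat) (B : int) (p q : int) :
  (forall l : nat, YW u (A%:Z + l%:Z) w = 0) ->
  (forall l : nat, YW v (q + B + 1 + l%:Z) w = 0) ->
  YW u p (YW v q w) = \sum_(i <- upto B) \sum_(j <- upto A%:Z)
     (binF F (p - A%:Z) i * binF F A%:Z j) *:
        YW (Y u (p - A%:Z - i%:Z + j%:Z) v) (q + A%:Z + i%:Z - j%:Z) w.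
Proof.
move=> hu hv; rewrite /upto.
case: (lerP 0 B) => hB; last first.
  have := hv (absz (- B - 1)).
  have -> : q + B + 1 + (absz (- B - 1))%:Z = q by lia.
  by move=> ->; rewrite YWr0 big_nil.
set Bn := absz B; rewrite big_iota0_ord.
pose T s := YW u (p - s%:Z) (YW v (q + s%:Z) w).
have -> : YW u p (YW v q w) = T 0%N by rewrite /T subr0 addr0.
rewrite -(binF_inversion (p - A%:Z) Bn T).
apply: eq_bigr => i _; rewrite big_iota0_ord /=.
transitivity (binF F (p - A%:Z) i *:
   \sum_(l < Bn.+1 - i) ((-1) ^+ l * binF F (p - A%:Z - i%:Z) l) *:
       YW u (A%:Z + (p - A%:Z - i%:Z) - l%:Z) (YW v (q + i%:Z + l%:Z) w)).
  congr (_ *: _); apply: eq_bigr => l _.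
  by rewrite /T; congr (_ *: YW u _ (YW v _ w)); lia.
rewrite -(@jacobi_trunc u v w A (p - A%:Z - i%:Z) (q + i%:Z) (Bn.+1 - i) hu); last first.
  move=> l hl; rewrite -(hv (i + l - Bn.+1)%N).
  by congr (YW v _ w); rewrite /Bn in hl *; lia.
rewrite scaler_sumr; apply: eq_bigr => j _; rewrite scalerA.
by congr (_ *: YW _ _ _); lia.
Qed.

Inductive top_span (t : W) (d : int) : W -> Prop :=
| top_span0 : top_span t d 0
| top_span_lin a w1 w2 : top_span t d w1 -> top_span t d w2 -> top_span t d (a *: w1 + w2)
| top_span_mode k c r : G k c -> k%:Z - r - 1 = d -> top_span t d (YW c r t).

Lemma top_spanZ t d a w : top_span t d w -> top_span t d (a *: w).
Proof. by move=> h; rewrite -[_ *: w]addr0; apply: top_span_lin => //; exact: top_span0. Qed.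

Lemma top_span_sum t d (I : Type) (r : seq I) (g : I -> W) :
  (forall i, top_span t d (g i)) -> top_span t d (\sum_(i <- r) g i).
Proof.
move=> h; apply: big_ind => //; first exact: top_span0.
by move=> w1 w2 h1 h2; rewrite -[w1]scale1r; apply: top_span_lin.
Qed.

Section TopLevel.
Variables (t : W) (ht : in_top G YW t).

(* For k - r - 1 >= 0, associativity rewrites v_q c_r t as a combination of
   modes (v_i c)_j t of the right degree. *)
Lemma top_span_YW b v q d w :
  G b v -> top_span t d w -> top_span t (b%:Z - q - 1 + d) (YW v q w).
Proof.
move=> Gb; elim=> [|a w1 w2 _ IH1 _ IH2|k c r Gk <-].
- by rewrite YWr0; exact: top_span0.
- by rewrite YWrD YWrZ; apply: top_span_lin.
case: (ltrP (k%:Z - r - 1) 0) => hneg.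
  by rewrite (ht Gk hneg) YWr0; exact: top_span0.
rewrite (@assoc_YW v c t b (k%:Z - r - 1) q r).
- apply: top_span_sum => i; apply: top_span_sum => j; apply: top_spanZ.
  have := hVgr (q - b%:Z - i%:Z + j%:Z) Gb Gk.
  case E: (k%:Z + b%:Z - (q - b%:Z - i%:Z + j%:Z) - 1) => [K|K] /= hg.
    by apply: (top_span_mode _ hg); lia.
  by rewrite hg YWl0; exact: top_span0.
- by move=> l; apply: (ht Gb); lia.
- by move=> l; apply: (ht Gk); lia.
Qed.

Lemma top_span_neg d w : top_span t d w -> d < 0 -> w = 0.
Proof.
move=> h hd; elim: h => [|a w1 w2 _ -> _ ->|k c r Gk hk] //.
- by rewrite scaler0 addr0.
- by apply: (ht Gk); rewrite hk.
Qed.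

Lemma word_deg_nil d : word_deg G [::] d -> d = 0.
Proof. by case=> ks [_ [_ ->]]; rewrite big_ord0. Qed.

Lemma word_degP u m x d : word_deg G ((u, m) :: x) d ->
  exists k d', [/\ G k u, word_deg G x d' & d = k%:Z - m - 1 + d'].
Proof.
case=> ks [hs [hG hd]]; case: ks hs hG hd => [|k ks] //= [hs] hG hd.
exists k, (\sum_(i < size x) ((nth 0%N ks i)%:Z - (nth (0, 0) x i).2 - 1)); split.
- exact: (hG 0%N).
- by exists ks; split => //; split => // i hi; exact: (hG i.+1 hi).
- by rewrite hd big_ord_recl.
Qed.

Lemma word_deg_cons k u m x d : G k u -> word_deg G x d ->
  word_deg G ((u, m) :: x) (k%:Z - m - 1 + d).
Proof.
move=> Gk [ks [hs [hG hd]]]; exists (k :: ks); split; first by rewrite /= hs.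
split; first by case=> [|i] //= hi; exact: hG.
by rewrite /= big_ord_recl /= hd.
Qed.

Lemma top_span_act_word x d :
  word_deg G x d -> x <> [::] -> top_span t d (act_word x t).
Proof.
elim: x d => [|[v q] y IH] d //= hx _.
have [b [d' [Gb hy ->]]] := word_degP hx; clear hx.
case: y IH hy => [|l y] IH hy; last by apply: top_span_YW => //; apply: IH.
by rewrite (word_deg_nil hy); apply: (top_span_mode _ Gb); lia.
Qed.

Lemma act_word_deg_neg x d : word_deg G x d -> d < 0 -> act_word x t = 0.
Proof.
case: x => [|l x] hx hd; first by move: hd; rewrite (word_deg_nil hx).
exact: top_span_neg (top_span_act_word hx _) hd.
Qed.

Lemma YW_act_word_deg_neg k u m x d : G k u -> word_deg G x d ->
  k%:Z - m - 1 + d < 0 -> YW u m (act_word x t) = 0.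
Proof. by move=> Gk hx; exact: (act_word_deg_neg (x := (u, m) :: x) (word_deg_cons m Gk hx)). Qed.

Lemma assoc_act_word a b u v x d p q : G a u -> G b v -> word_deg G x d ->
  YW u p (YW v q (act_word x t)) =
  \sum_(i <- upto (b%:Z + d - q - 1)) \sum_(j <- upto (a%:Z + d))
     (binF F (p - a%:Z - d) i * binF F (a%:Z + d) j) *:
        YW (Y u (p - a%:Z - d - i%:Z + j%:Z) v) (q + a%:Z + d + i%:Z - j%:Z) (act_word x t).
Proof.
move=> Gu Gv hx; case: (ltrP d 0) => hd.
  rewrite (act_word_deg_neg hx hd) !YWr0 big1 // => i _.
  by rewrite big1 // => j _; rewrite YWr0 scaler0.
have eA : a%:Z + d = (absz (a%:Z + d))%:Z by lia.
rewrite eA (@assoc_YW u v _ (absz (a%:Z + d)) (b%:Z + d - q - 1) p q).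
- apply: eq_bigr => i _; apply: eq_bigr => j _.
  by congr ((binF F _ i * _) *: YW (Y u _ v) _ _); lia.
- by move=> l; apply: (YW_act_word_deg_neg Gu hx); lia.
- by move=> l; apply: (YW_act_word_deg_neg Gv hx); lia.
Qed.

Lemma jacobi_act_word a b u v x d p q i : G a u -> G b v -> word_deg G x d ->
  b%:Z + d - q <= i ->
  \sum_(j <- upto (a%:Z + d))
     binF F (a%:Z + d) j *: YW (Y u (p - i - j%:Z) v) (q + i + j%:Z) (act_word x t) = 0.
Proof.
move=> Gu Gv hx hi; case: (ltrP d 0) => hd.
  by rewrite (act_word_deg_neg hx hd) big1 // => j _; rewrite YWr0 scaler0.
have eA : a%:Z + d = (absz (a%:Z + d))%:Z by lia.
set A := absz (a%:Z + d) in eA; rewrite eA (_ : upto A%:Z = iota 0 A.+1) // big_iota0_ord.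
have := @jacobi_trunc u v (act_word x t) A (p - i - A%:Z) (q + i) 0%N.
rewrite big_ord0 => h; rewrite -[RHS]h; last 2 first.
- by move=> l; apply: (YW_act_word_deg_neg Gu hx); lia.
- by move=> l _; apply: (YW_act_word_deg_neg Gv hx); lia.
(* reindex j -> A - j, using the symmetry of binomial coefficients *)
rewrite -(big_mkord xpredT (fun j => binF F A j *:
   YW (Y u (p - i - j%:Z) v) (q + i + j%:Z) (act_word x t))).
rewrite big_nat_rev /= big_mkord; apply: eq_bigr => j _.
have hj : (j <= A)%N by rewrite -ltnS.
rewrite add0n subSS /binF /= bin_sub //.
by congr (_ *: YW (Y u _ v) _ _); lia.
Qed.

End TopLevel.

Section Extension.
Variables (M : lmodType F) (rho : V -> M -> M) (f : M -> W).
Hypothesis hf : is_AV_map G rho YW f.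

Definition eval_word (p : word V M) : W := act_word p.1 (f p.2).

Lemma eval_word_prefix s c :
  eval_combo eval_word (prefix_combo s c) = act_word s (eval_combo eval_word c).
Proof.
rewrite /eval_combo /prefix_combo big_map /= act_word_sum.
by apply: eq_bigr => p _; rewrite /eval_word act_word_cat.
Qed.

Lemma eval_word_SM_gen c : SM_gen Y G rho c -> eval_combo eval_word c = 0.
Proof.
case: hf => hflin [hftop hfrho]; rewrite /eval_combo /eval_word.
case=> [x1 x2 a u u' n w|x a w w'|k u m x w d Gk hx hneg|k u w Gk
       |a b u v x w d p q Gu Gv hx _ _|a b u v x w d p q i Gu Gv hx hi].
- rewrite !big_cons big_nil /= !act_word_cat /= YWlD YWlZ act_wordD act_wordZ.
  by rewrite !scale1r scaleNr scaleN1r addr0 -opprD subrr.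
- rewrite !big_cons big_nil /= hflin act_wordD act_wordZ.
  by rewrite !scale1r scaleNr scaleN1r addr0 -opprD subrr.
- by rewrite big_cons big_nil /= addr0 scale1r (YW_act_word_deg_neg (hftop w) Gk hx).
- by rewrite !big_cons big_nil /= addr0 scale1r scaleN1r (hfrho k u w Gk) subrr.
- rewrite big_cons big_flatten big_map /= scale1r (assoc_act_word (hftop w) p q Gu Gv hx).
  apply/eqP; rewrite addr_eq0 -sumrN; apply/eqP; apply: eq_bigr => i _.
  by rewrite big_map -sumrN; apply: eq_bigr => j _; rewrite scaleNr opprK.
- by rewrite big_map; exact: (jacobi_act_word (hftop w) p Gu Gv hx hi).
Qed.

End Extension.
End WeakModule.

Theorem theorem5p5 (F : fieldType) (hF : [pchar F] =i pred0)
  (V : lmodType F) (Y : V -> int -> V -> V) (one : V) (G : nat -> V -> Prop)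
  (hV : is_NgradedVA Y one G)
  (M : lmodType F) (rho : V -> M -> M) (hM : is_AV_module Y one G rho)
  (W : lmodType F) (YW : V -> int -> W -> W)
  (hW : is_Ngradable_weak_module Y one G YW)
  (f : M -> W) (hf : is_AV_map G rho YW f) :
  exists phi : word V M -> W,
    SM_module_map_extending Y G rho YW f phi /\
    forall psi : word V M -> W,
      SM_module_map_extending Y G rho YW f psi -> forall x, psi x = phi x.
Proof.
case: hV => _ [hVtr [_ [_ [_ [_ hVgr]]]]].
case: hW => [[hWbil [_ [_ hJ]]] _].
exists (eval_word YW f); split.
  split=> // s c hc.
  by rewrite eval_word_prefix // (eval_word_SM_gen hVtr hVgr hWbil hJ hf hc) act_word0.
move=> psi [_ [psi_mode psi_top]] [x w].
by elim: x => [|[u n] x IH] /=; rewrite ?psi_top // psi_mode IH.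
Qed.
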